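(* Let $(X,d)$ be a complete metric space, $\Lambda$ a finite set, $\mathcal{F}=\{X; f_{\lambda}\mid\lambda\in\Lambda\}$ an iterated function system, and $k\ge2$ an integer. Let $\mathcal{F}^k=\{X; f_{\lambda_{k-1}}\circ\cdots\circ f_{\lambda_0}\mid \lambda_0,\dots,\lambda_{k-1}\in\Lambda\}$ be the iterated function system consisting of all compositions of $k$ maps of $\mathcal{F}$ (indexed by $\Pi=\Lambda^k$). If $\mathcal{F}$ has the average shadowing property on $\mathbb{Z}_+$, then so does $\mathcal{F}^k$.
   Context: An iterated function system (IFS) $\mathcal{G}=\{X; g_{\mu}\mid\mu\in M\}$ on a metric space $(X,d)$ is a family of continuous maps $g_\mu:X\to X$ indexed by a finite nonempty set $M$. For $\sigma=(\mu_0,\mu_1,\dots)\in M^{\mathbb{Z}_+}$ write $\mathcal{G}_{\sigma_n}=g_{\mu_{n-1}}\circ\cdots\circ g_{\mu_0}$ for $n\ge1$ and $\mathcal{G}_{\sigma_0}=\mathrm{id}_X$. For $\delta>0$, a sequence $(x_i)_{i\ge0}$ in $X$ is a $\delta$-average pseudo-orbit of $\mathcal{G}$ if there exist a natural number $N$ and $\sigma=(\mu_0,\mu_1,\dots)\in M^{\mathbb{Z}_+}$ such that for all $n\ge N$, $\frac1n\sum_{i=0}^{n-1}d(g_{\mu_i}(x_i),x_{i+1})<\delta$. A sequence $(x_i)_{i\ge0}$ is $\epsilon$-shadowed in average by $z\in X$ if there exists $\sigma\in M^{\mathbb{Z}_+}$ with $\limsup_{n\to\infty}\frac1n\sum_{i=0}^{n-1}d(\mathcal{G}_{\sigma_i}(z),x_i)<\epsilon$.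 $\mathcal{G}$ has the average shadowing property (on $\mathbb{Z}_+$) if for every $\epsilon>0$ there is $\delta>0$ such that every $\delta$-average pseudo-orbit of $\mathcal{G}$ is $\epsilon$-shadowed in average by some point of $X$. *)

From Stdlib Require Import Reals List Arith.
From Coquelicot Require Import Coquelicot.
Open Scope R_scope.

Definition is_metric {X : Type} (d : X -> X -> R) : Prop :=
  (forall x y, 0 <= d x y) /\
  (forall x y, d x y = 0 <-> x = y) /\
  (forall x y, d x y = d y x) /\
  (forall x y z, d x z <= d x y + d y z).

Definition is_complete {X : Type} (d : X -> X -> R) : Prop :=
  forall u : nat -> X,
    (forall eps, 0 < eps -> exists N, forall m n, (N <= m)%nat -> (N <= n)%nat ->
        d (u m) (u n) < eps) ->
    exists x, forall eps, 0 < eps -> exists N, forall n, (N <= n)%nat -> d (u n) x < eps.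

Definition metric_continuous {X : Type} (d : X -> X -> R) (f : X -> X) : Prop :=
  forall x eps, 0 < eps -> exists delta, 0 < delta /\
    forall y, d x y < delta -> d (f x) (f y) < eps.

Definition finite_nonempty (M : Type) : Prop :=
  inhabited M /\ exists l : list M, forall m, In m l.

Fixpoint psum (u : nat -> R) (n : nat) : R :=
  match n with O => 0 | S m => psum u m + u m end.

Fixpoint orbit {X M : Type} (g : M -> X -> X) (s : nat -> M) (n : nat) (z : X) : X :=
  match n with O => z | S m => g (s m) (orbit g s m z) end.

Definition avg_pseudo_orbit {X M : Type} (d : X -> X -> R) (g : M -> X -> X)
  (delta : R) (x : nat -> X) : Prop :=
  exists (N : nat) (s : nat -> M), forall n : nat, (N <= n)%nat -> (0 < n)%nat ->
    / INR n * psum (fun i => d (g (s i) (x i)) (x (S i))) n < delta.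

Definition avg_shadowed {X M : Type} (d : X -> X -> R) (g : M -> X -> X)
  (eps : R) (x : nat -> X) (z : X) : Prop :=
  exists s : nat -> M,
    Rbar_lt (LimSup_seq (fun n => / INR n * psum (fun i => d (orbit g s i z) (x i)) n))
            (Finite eps).

Definition average_shadowing {X M : Type} (d : X -> X -> R) (g : M -> X -> X) : Prop :=
  forall eps, 0 < eps -> exists delta, 0 < delta /\
    forall x : nat -> X, avg_pseudo_orbit d g delta x ->
      exists z : X, avg_shadowed d g eps x z.

(* the k-fold IFS: index p = [l0; ...; l_{k-1}], map f_{l_{k-1}} o ... o f_{l_0} *)
Definition word (L : Type) (k : nat) : Type := { l : list L | length l = k }.

Definition compose_word {X L : Type} (f : L -> X -> X) (l : list L) (x : X) : X :=
  fold_left (fun y a => f a y) l x.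

Definition ifs_power {X L : Type} (f : L -> X -> X) (k : nat) : word L k -> X -> X :=
  fun p => compose_word f (proj1_sig p).

(** Let [y] be a [delta]-average pseudo-orbit of [F^k] along words [p n].
    Unfolding each word letter by letter interpolates [y] into a sequence of
    [F] whose one-step errors vanish inside a block and equal the [F^k]-error
    at block ends, so its error averages are still below [delta]. Shadowing it
    by [F] within [eps / k] and regrouping the shadowing letters into words of
    length [k] gives an [F^k]-orbit whose distances to [y] are a subsequence of
    the [F]-distances, at most [k] times their average. *)

From Stdlib Require Import Reals List Arith Lia Lra.
From Coquelicot Require Import Coquelicot.
Open Scope R_scope.

Lemma psum_ext (u v : nat -> R) n :
  (forall i, (i < n)%nat -> u i = v i) -> psum u n = psum v n.
Proof.
  induction n as [|n IH]; simpl; intros H; [reflexivity|].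
  rewrite IH by (intros; apply H; lia); rewrite H by lia; reflexivity.
Qed.

Lemma psum_zero (u : nat -> R) n : (forall i, (i < n)%nat -> u i = 0) -> psum u n = 0.
Proof.
  intros H; rewrite (psum_ext u (fun _ => 0)) by exact H; clear H.
  induction n as [|n IH]; simpl; [reflexivity | rewrite IH; ring].
Qed.

Lemma psum_add (u : nat -> R) a b :
  psum u (a + b) = psum u a + psum (fun i => u (a + i)%nat) b.
Proof.
  induction b as [|b IH]; simpl; [rewrite Nat.add_0_r; ring|].
  rewrite Nat.add_succ_r; simpl; rewrite IH; ring.
Qed.

Lemma psum_le_compat (u v : nat -> R) n :
  (forall i, (i < n)%nat -> u i <= v i) -> psum u n <= psum v n.
Proof.
  induction n as [|n IH]; simpl; intros H; [lra|].
  pose proof (H n (Nat.lt_succ_diag_r n)); pose proof (IH ltac:(intros; apply H; lia)); lra.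
Qed.

Lemma psum_nonneg (u : nat -> R) n : (forall i, 0 <= u i) -> 0 <= psum u n.
Proof.
  intros H; apply (Rle_trans _ (psum (fun _ => 0) n)).
  - rewrite psum_zero by auto; lra.
  - apply psum_le_compat; auto.
Qed.

Lemma psum_le_mono (u : nat -> R) a b :
  (forall i, 0 <= u i) -> (a <= b)%nat -> psum u a <= psum u b.
Proof.
  intros H Hab; replace b with (a + (b - a))%nat by lia; rewrite psum_add.
  pose proof (psum_nonneg (fun i => u (a + i)%nat) (b - a) (fun i => H _)); lra.
Qed.

Lemma psum_blocks (u : nat -> R) k n :
  psum u (n * k) = psum (fun j => psum (fun r => u (j * k + r)%nat) k) n.
Proof.
  induction n as [|n IH]; simpl; [reflexivity|].
  rewrite Nat.add_comm, psum_add, IH; reflexivity.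
Qed.

Lemma psum_sample_le (u : nat -> R) k n :
  (forall i, 0 <= u i) -> (0 < k)%nat -> psum (fun j => u (j * k)%nat) n <= psum u (n * k).
Proof.
  intros H Hk; rewrite psum_blocks; apply psum_le_compat; intros j _.
  pose proof (psum_le_mono (fun r => u (j * k + r)%nat) 1 k (fun _ => H _) Hk) as Hle.
  simpl in Hle; rewrite Nat.add_0_r in Hle; lra.
Qed.

Lemma avg_lt_iff (s a : R) n : (0 < n)%nat -> (/ INR n * s < a <-> s < a * INR n).
Proof.
  intros Hn; pose proof (lt_0_INR n Hn) as Hnr.
  split; intros H.
  - apply (Rmult_lt_compat_r (INR n)) in H; auto.
    replace (/ INR n * s * INR n) with s in H by (field; lra); exact H.
  - apply (Rmult_lt_reg_r (INR n)); auto.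
    replace (/ INR n * s * INR n) with s by (field; lra); exact H.
Qed.

Lemma avg_lt_of_block_avg (u v : nat -> R) k N delta :
  (0 < k)%nat -> (forall i, 0 <= u i) ->
  (forall n, psum u (n * k) = psum v n) ->
  (forall n, (N <= n)%nat -> (0 < n)%nat -> / INR n * psum v n < delta) ->
  forall m, (k * (N + 1) <= m)%nat -> (0 < m)%nat -> / INR m * psum u m < delta.
Proof.
  intros Hk Hu Hblock Hv m Hm Hm0.
  set (q := ((m + (k - 1)) / k)%nat).
  pose proof (Nat.div_mod_eq (m + (k - 1)) k) as Hdiv.
  pose proof (Nat.mod_upper_bound (m + (k - 1)) k ltac:(lia)).
  fold q in Hdiv.
  assert (Hq_lo : (N + 1 <= q)%nat) by (apply Nat.div_le_lower_bound; lia).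
  assert (Hq_hi : (m <= q * k)%nat) by lia.
  assert (Hqm : (q <= m)%nat) by nia.
  assert (Hmono : psum u m <= psum v q).
  { rewrite <- Hblock; apply psum_le_mono; auto. }
  assert (Hvq : psum v q < delta * INR q).
  { apply avg_lt_iff; [lia|]; apply Hv; lia. }
  assert (Hdelta : 0 < delta).
  { pose proof (psum_nonneg u m Hu); pose proof (lt_0_INR q ltac:(lia)); nra. }
  pose proof (le_INR _ _ Hqm).
  apply avg_lt_iff; [exact Hm0|]; nra.
Qed.

Lemma LimSup_seq_lt_eventually (u : nat -> R) c :
  Rbar_lt (LimSup_seq u) (Finite c) ->
  exists c' N, c' < c /\ forall n, (N <= n)%nat -> u n < c'.
Proof.
  destruct (ex_LimSup_seq u) as [l Hl]; rewrite (is_LimSup_seq_unique _ _ Hl).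
  destruct l as [l| |]; simpl in *; intros Hlt; try contradiction.
  - assert (Hpos : 0 < (c - l) / 2) by lra.
    destruct (Hl (mkposreal _ Hpos)) as [_ [N HN]].
    exists (l + (c - l) / 2), N; split; [simpl; lra | exact HN].
  - destruct (Hl (c - 1)) as [N HN]; exists (c - 1), N; split; [lra | exact HN].
Qed.

Lemma LimSup_seq_lt_scale (u v : nat -> R) (phi : nat -> nat) a c :
  0 < a -> (forall n, (n <= phi n)%nat) ->
  Rbar_lt (LimSup_seq u) (Finite c) ->
  (exists N, forall n, (N <= n)%nat -> v n <= a * u (phi n)) ->
  Rbar_lt (LimSup_seq v) (Finite (a * c)).
Proof.
  intros Ha Hphi Hu [N Hv].
  destruct (LimSup_seq_lt_eventually u c Hu) as [c' [N' [Hc' HN']]].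
  apply Rbar_le_lt_trans with (LimSup_seq (fun _ => a * c')).
  - apply LimSup_le; exists (N + N')%nat; intros n Hn.
    pose proof (Hv n ltac:(lia)); pose proof (HN' (phi n) ltac:(specialize (Hphi n); lia)).
    nra.
  - rewrite LimSup_seq_const; simpl; nra.
Qed.

Lemma psum_last_only (u : nat -> R) n :
  (0 < n)%nat -> (forall i, (S i < n)%nat -> u i = 0) -> psum u n = u (n - 1)%nat.
Proof.
  destruct n as [|n]; [lia|]; intros _ H; simpl.
  rewrite psum_zero by (intros; apply H; lia); rewrite Nat.sub_0_r; ring.
Qed.

Lemma avg_sample_le (u : nat -> R) k n :
  (forall i, 0 <= u i) -> (0 < k)%nat -> (0 < n)%nat ->
  / INR n * psum (fun j => u (j * k)%nat) n <= INR k * (/ INR (n * k) * psum u (n * k)).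
Proof.
  intros Hu Hk Hn; pose proof (lt_0_INR n Hn); pose proof (lt_0_INR k Hk).
  replace (INR k * (/ INR (n * k) * psum u (n * k))) with (/ INR n * psum u (n * k))
    by (rewrite mult_INR; field; lra).
  apply Rmult_le_compat_l; [left; apply Rinv_0_lt_compat; lra|].
  apply psum_sample_le; assumption.
Qed.

Lemma firstn_S_nth {A} (l : list A) r dflt :
  (r < length l)%nat -> firstn (S r) l = firstn r l ++ nth r l dflt :: nil.
Proof.
  revert r; induction l as [|a l IH]; intros r Hr; simpl in *; [lia|].
  destruct r; simpl; [reflexivity|]; f_equal; apply IH; lia.
Qed.

Lemma compose_word_firstn_S {X L} (f : L -> X -> X) (l : list L) r dflt x :
  (r < length l)%nat ->
  compose_word f (firstn (S r) l) x = f (nth r l dflt) (compose_word f (firstn r l) x).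
Proof.
  intros Hr; unfold compose_word; rewrite (firstn_S_nth l r dflt Hr), fold_left_app.
  reflexivity.
Qed.

Lemma compose_word_orbit {X L} (f : L -> X -> X) (s : nat -> L) z b : forall a,
  compose_word f (map s (seq a b)) (orbit f s a z) = orbit f s (a + b) z.
Proof.
  induction b as [|b IH]; intros a; simpl; [rewrite Nat.add_0_r; reflexivity|].
  unfold compose_word in *; simpl.
  change (f (s a) (orbit f s a z)) with (orbit f s (S a) z).
  rewrite IH; f_equal; lia.
Qed.

Lemma divmod_block k n r : (r < k)%nat -> ((n * k + r) / k = n /\ (n * k + r) mod k = r)%nat.
Proof.
  intros H; split.
  - symmetry; apply (Nat.div_unique _ _ _ r); lia.
  - symmetry; apply (Nat.mod_unique _ _ n); lia.
Qed.

Section Interpolation.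

Context {X L : Type}.
Variables (f : L -> X -> X) (k : nat) (dflt : L).
Variables (y : nat -> X) (p : nat -> word L k).
Hypothesis k_gt0 : (0 < k)%nat.

Definition interp_point (i : nat) : X :=
  compose_word f (firstn (i mod k) (proj1_sig (p (i / k)))) (y (i / k)).

Definition interp_letter (i : nat) : L := nth (i mod k) (proj1_sig (p (i / k))) dflt.

Lemma interp_point_block n r : (r < k)%nat ->
  interp_point (n * k + r) = compose_word f (firstn r (proj1_sig (p n))) (y n).
Proof.
  intros Hr; destruct (divmod_block k n r Hr) as [Hdiv Hmod].
  unfold interp_point; rewrite Hdiv, Hmod; reflexivity.
Qed.

Lemma interp_point_block_start n : interp_point (n * k) = y n.
Proof. rewrite <- (Nat.add_0_r (n * k)), interp_point_block by lia; reflexivity. Qed.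

Lemma interp_step n r : (r < k)%nat ->
  f (interp_letter (n * k + r)) (interp_point (n * k + r))
  = compose_word f (firstn (S r) (proj1_sig (p n))) (y n).
Proof.
  intros Hr; destruct (divmod_block k n r Hr) as [Hdiv Hmod].
  unfold interp_letter; rewrite Hdiv, Hmod, interp_point_block by exact Hr.
  rewrite (compose_word_firstn_S f _ r dflt); [reflexivity|].
  destruct (p n) as [l Hl]; simpl; lia.
Qed.

Lemma interp_error_blocks (d : X -> X -> R) : (forall x, d x x = 0) -> forall n,
  psum (fun i => d (f (interp_letter i) (interp_point i)) (interp_point (S i))) (n * k)
  = psum (fun j => d (ifs_power f k (p j) (y j)) (y (S j))) n.
Proof.
  intros d_refl n; rewrite psum_blocks; apply psum_ext; intros j _.
  rewrite psum_last_only by (try exact k_gt0; intros r Hr;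
    rewrite <- Nat.add_succ_r, interp_step, interp_point_block by lia; apply d_refl).
  replace (S (j * k + (k - 1))) with (S j * k)%nat by (simpl; lia).
  rewrite interp_step, interp_point_block_start by lia.
  replace (S (k - 1)) with k by lia.
  destruct (p j) as [l Hl]; simpl; rewrite firstn_all2 by lia; reflexivity.
Qed.

End Interpolation.

Lemma map_seq_length {L} (s : nat -> L) k j : length (map s (seq (j * k) k)) = k.
Proof. rewrite length_map, length_seq; reflexivity. Qed.

Definition block_word {L} (s : nat -> L) (k j : nat) : word L k :=
  exist _ (map s (seq (j * k) k)) (map_seq_length s k j).

Lemma orbit_block_word {X L} (f : L -> X -> X) (s : nat -> L) k z j :
  orbit (ifs_power f k) (block_word s k) j z = orbit f s (j * k) z.
Proof.
  induction j as [|j IH]; [reflexivity|].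
  simpl orbit; rewrite IH; unfold ifs_power, block_word; simpl proj1_sig.
  rewrite compose_word_orbit; f_equal; lia.
Qed.

Theorem mainTheorem3 (X : Type) (d : X -> X -> R) (L : Type) (f : L -> X -> X) (k : nat) :
  is_metric d -> is_complete d ->
  finite_nonempty L ->
  (forall a : L, metric_continuous d (f a)) ->
  (2 <= k)%nat ->
  average_shadowing d f ->
  average_shadowing d (ifs_power f k).
Proof.
  intros [d_nonneg [d_zero _]] _ [[dflt] _] _ Hk HAS eps Heps.
  assert (k_gt0 : (0 < k)%nat) by lia.
  pose proof (lt_0_INR k k_gt0) as Hkr.
  destruct (HAS (eps / INR k)) as [delta [Hdelta Hsh]]; [apply Rdiv_lt_0_compat; lra|].
  exists delta; split; [exact Hdelta|].
  intros y [N [p Hp]].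
  set (x := interp_point f k y p).
  assert (Hpo : avg_pseudo_orbit d f delta x).
  { exists (k * (N + 1))%nat, (interp_letter k dflt p).
    refine (avg_lt_of_block_avg _ _ k N delta k_gt0 _ _ Hp); [intros; apply d_nonneg|].
    apply interp_error_blocks; [exact k_gt0 | intros; apply d_zero; reflexivity]. }
  destruct (Hsh x Hpo) as [z [s Hs]].
  exists z, (block_word s k).
  replace eps with (INR k * (eps / INR k)) by (field; lra).
  refine (LimSup_seq_lt_scale _ _ (fun n => n * k)%nat _ _ Hkr _ Hs _); [intros; nia|].
  exists 1%nat; intros n Hn.
  rewrite (psum_ext _ (fun j => d (orbit f s (j * k) z) (x (j * k)%nat))).
  - apply (avg_sample_le (fun i => d (orbit f s i z) (x i))); auto.
  - intros j _; unfold x; rewrite orbit_block_word, interp_point_block_start by exact k_gt0.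
    reflexivity.
Qed.
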